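(* Let $\star$ be a continuous and sup-continuous triangle function and let $(G,\cdot,D,\star)$ be an invariant probabilistic metric group with identity $e$ (not necessarily complete). Then the group of invertible elements of the monoid $(Lip^1_\star(G,\Delta^+),\odot)$ is $$\mathcal U(Lip^1_\star(G,\Delta^+))=\langle\Pi(G),\mathcal U(\Delta^+)\rangle:=\{\langle f,U\rangle: f\in\Pi(G),\ U\in\mathcal U(\Delta^+)\}.$$ Moreover: (1) for all $f\in\Pi(G)$ and $U\in\mathcal U(\Delta^+)$, $\langle f,U\rangle^{-1}=\langle f^{-1},U^{-1}\rangle$ (where $f^{-1}$ is the inverse of $f$ in the group $(\Pi(G),\odot)$ and $U^{-1}$ the inverse of $U$ in $(\Delta^+,\star)$); (2) if $\mathcal U(\Delta^+)=\{\mathcal H_0\}$, then $(\mathcal U(Lip^1_\star(G,\Delta^+)),\odot,\mathbb D,\star)=(\Pi(G),\odot,\mathbb D,\star)$; (3) if $\mathcal U(\Delta^+)=\{\mathcal H_0\}$ and $G$ is complete, then $(\mathcal U(Lip^1_\star(G,\Delta^+)),\odot,\mathbb D,\star)=(\{\delta_a:a\in G\},\odot,\mathbb D,\star)$, which is isometrically isomorphic (via $\delta$) to $(G,\cdot,D,\star)$.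
   Context: A distribution function is a nondecreasing, left-continuous function $F:[-\infty,+\infty]\to[0,1]$ with $F(-\infty)=0$, $F(+\infty)=1$; $\Delta^+$ is the set of distribution functions with $F(0)=0$, ordered pointwise (a complete lattice with maximum $\mathcal H_0$, $\mathcal H_0(t)=0$ for $t\le0$, $1$ for $t>0$). A triangle function is a binary operation $\star$ on $\Delta^+$ that is commutative, associative, nondecreasing in each argument, with $F\star\mathcal H_0=F$; so $(\Delta^+,\star)$ is a commutative monoid, and $\mathcal U(\Delta^+)$ denotes its group of invertible elements. $\star$ is sup-continuous if $\sup_i(F_i\star L)=(\sup_iF_i)\star L$ for every nonempty family $(F_i)$ and every $L$. $F_n\xrightarrow{w}F$ means $F_n(t)\to F(t)$ at every continuity point $t\in\mathbb R$ of $F$; $\star$ is continuous if $F_n\star L_n\xrightarrow{w}F\star L$ whenever $F_n\xrightarrow{w}F$, $L_n\xrightarrow{w}L$. A probabilistic metric space $(G,D,\star)$ consists of a set $G$, a triangle function $\star$ and $D:G\times G\to\Delta^+$ with (i) $D(p,q)=\mathcal H_0$ iff $p=q$; (ii) $D(p,q)=D(q,p)$; (iii) $D(p,q)\star D(q,r)\le D(p,r)$. If $(G,\cdot)$ is a group and $D(pr,qr)=D(rp,rq)=D(p,q)$ for all $p,q,r$, it is an invariant probabilistic metric group. A sequence $(z_n)$ is Cauchy if $D(z_n,z_p)\xrightarrow{w}\mathcal H_0$ as $n,p\to\infty$; completeness means every Cauchy sequence has a point $z$ with $D(z_n,z)\xrightarrow{w}\mathcal H_0$. $Lip^1_\star(G,\Delta^+)$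 is the set of maps $f:G\to\Delta^+$ with $D(x,y)\star f(y)\le f(x)$ for all $x,y$. $\delta_a(y)=D(y,a)$. For maps $f,g:G\to\Delta^+$, $(f\odot g)(x)=\sup_{y,z\in G,\ yz=x}f(y)\star g(z)$; $(Lip^1_\star(G,\Delta^+),\odot)$ is a monoid with identity $\delta_e$. $\Pi(G)$ is the set of $f\in Lip^1_\star(G,\Delta^+)$ for which there is a Cauchy sequence $(a_n)\subset G$ with $D(a_n,x)\xrightarrow{w}f(x)$ for all $x$; $(\Pi(G),\odot)$ is a group. $\mathbb D(f,g)=\sup_{x\in G}f(x)\star g(x)$ for $f,g\in\Pi(G)$. For $f:G\to\Delta^+$ and $F\in\Delta^+$, $\langle f,F\rangle:G\to\Delta^+$ is $\langle f,F\rangle(x)=f(x)\star F$. *)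

From Stdlib Require Import Reals Classical ClassicalEpsilon FunctionalExtensionality.
Open Scope R_scope.

(* A distribution function F : [-oo,+oo] -> [0,1] is represented by its
   restriction to R; the values F(-oo)=0 and F(+oo)=1 are fixed by convention. *)
Definition distf := R -> R.

Definition left_continuous_at (F : R -> R) (t : R) : Prop :=
  forall eps, 0 < eps -> exists d, 0 < d /\
    forall s, t - d < s -> s <= t -> Rabs (F s - F t) < eps.

Definition in_Delta (F : distf) : Prop :=
  (forall t, 0 <= F t <= 1) /\
  (forall s t, s <= t -> F s <= F t) /\
  (forall t, left_continuous_at F t) /\
  F 0 = 0.

Definition Fle (F L : distf) : Prop := forall t, F t <= L t.

Definition H0 : distf := fun t => if Rle_dec t 0 then 0 else 1.

(* supremum of a set of reals (meaningful for nonempty bounded sets) *)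
Definition Rsup (E : R -> Prop) : R :=
  match excluded_middle_informative (bound E /\ exists x, E x) with
  | left H => proj1_sig (completeness E (proj1 H) (proj2 H))
  | right _ => 0
  end.

(* pointwise supremum of a family of distribution functions
   (this is the lattice supremum in Delta^+) *)
Definition supD {I : Type} (Fm : I -> distf) : distf :=
  fun t => Rsup (fun r => exists i, r = Fm i t).

Definition is_triangle_function (star : distf -> distf -> distf) : Prop :=
  (forall F L, in_Delta F -> in_Delta L -> in_Delta (star F L)) /\
  (forall F L, in_Delta F -> in_Delta L -> star F L = star L F) /\
  (forall F L M, in_Delta F -> in_Delta L -> in_Delta M ->
      star (star F L) M = star F (star L M)) /\
  (forall F F' L, in_Delta F -> in_Delta F' -> in_Delta L ->
      Fle F F' -> Fle (star F L) (star F' L)) /\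
  (forall F L L', in_Delta F -> in_Delta L -> in_Delta L' ->
      Fle L L' -> Fle (star F L) (star F L')) /\
  (forall F, in_Delta F -> star F H0 = F).

Definition sup_continuous (star : distf -> distf -> distf) : Prop :=
  forall (I : Type) (Fm : I -> distf) (L : distf),
    inhabited I -> (forall i, in_Delta (Fm i)) -> in_Delta L ->
    supD (fun i => star (Fm i) L) = star (supD Fm) L.

Definition wconv (Fs : nat -> distf) (F : distf) : Prop :=
  forall t, continuity_pt F t -> Un_cv (fun n => Fs n t) (F t).

Definition wconv2 (Fs : nat -> nat -> distf) (F : distf) : Prop :=
  forall t, continuity_pt F t -> forall eps, 0 < eps -> exists N : nat,
    forall n p : nat, (n >= N)%nat -> (p >= N)%nat -> Rabs (Fs n p t - F t) < eps.

Definition continuous_tf (star : distf -> distf -> distf) : Prop :=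
  forall (Fs Ls : nat -> distf) (F L : distf),
    (forall n, in_Delta (Fs n)) -> (forall n, in_Delta (Ls n)) ->
    in_Delta F -> in_Delta L ->
    wconv Fs F -> wconv Ls L -> wconv (fun n => star (Fs n) (Ls n)) (star F L).

Definition unit_Delta (star : distf -> distf -> distf) (U : distf) : Prop :=
  in_Delta U /\ exists V, in_Delta V /\ star U V = H0 /\ star V U = H0.

Section PM.
Context {G : Type}.

Definition is_group (mul : G -> G -> G) (e : G) : Prop :=
  (forall x y z, mul (mul x y) z = mul x (mul y z)) /\
  (forall x, mul e x = x) /\ (forall x, mul x e = x) /\
  (forall x, exists y, mul y x = e /\ mul x y = e).

Definition is_PM (star : distf -> distf -> distf) (D : G -> G -> distf) : Prop :=
  (forall p q, in_Delta (D p q)) /\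
  (forall p q, D p q = H0 <-> p = q) /\
  (forall p q, D p q = D q p) /\
  (forall p q r, Fle (star (D p q) (D q r)) (D p r)).

Definition is_invariant (mul : G -> G -> G) (D : G -> G -> distf) : Prop :=
  forall p q r, D (mul p r) (mul q r) = D p q /\ D (mul r p) (mul r q) = D p q.

Definition Cauchy_seq (D : G -> G -> distf) (z : nat -> G) : Prop :=
  wconv2 (fun n p => D (z n) (z p)) H0.

Definition complete_PM (D : G -> G -> distf) : Prop :=
  forall z : nat -> G, Cauchy_seq D z -> exists x, wconv (fun n => D (z n) x) H0.

Definition is_Lip (star : distf -> distf -> distf) (D : G -> G -> distf)
  (f : G -> distf) : Prop :=
  (forall x, in_Delta (f x)) /\ (forall x y, Fle (star (D x y) (f y)) (f x)).

Definition delta (D : G -> G -> distf) (a : G) : G -> distf := fun y => D y a.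

Definition odot (star : distf -> distf -> distf) (mul : G -> G -> G)
  (f g : G -> distf) : G -> distf :=
  fun x t => Rsup (fun r => exists y z, mul y z = x /\ r = star (f y) (g z) t).

Definition unit_Lip (star : distf -> distf -> distf) (mul : G -> G -> G) (e : G)
  (D : G -> G -> distf) (h : G -> distf) : Prop :=
  is_Lip star D h /\ exists k, is_Lip star D k /\
    odot star mul h k = delta D e /\ odot star mul k h = delta D e.

Definition in_Pi (star : distf -> distf -> distf) (D : G -> G -> distf)
  (f : G -> distf) : Prop :=
  is_Lip star D f /\ exists a : nat -> G, Cauchy_seq D a /\
    forall x, wconv (fun n => D (a n) x) (f x).

Definition DD (star : distf -> distf -> distf) (f g : G -> distf) : distf :=
  fun t => Rsup (fun r => exists x, r = star (f x) (g x) t).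

Definition bracket (star : distf -> distf -> distf) (f : G -> distf) (F : distf) : G -> distf :=
  fun x => star (f x) F.

End PM.

From Stdlib Require Import Reals Lra Lia Classical ClassicalEpsilon FunctionalExtensionality.
Open Scope R_scope.

(* Since [F ⋆ L <= F] in Delta^+, the only unit of (Delta^+, ⋆)
   is H0, so everything reduces to U(Lip) = Pi(G).
   If [f] is in Pi(G), approximated by the Cauchy sequence (a_n), then
   [f u ⋆ f v <= D u v] and [f a_n --> H0]; hence x |-> f(x^-1) is a two-sided
   inverse: the supremum defining the product is bounded by [D x e] and attained
   in the limit along the factorisations x = (x a_n) a_n^-1.
   Conversely, if [h ⊙ k = δ_e], pick factorisations e = y_n z_n with
   [(h y_n ⋆ k z_n)(1/(n+1)) > 1 - 1/(n+1)]. Then [h y_n, k z_n --> H0] and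
   [h x ⋆ k z_n <= D x y_n], which makes (y_n) Cauchy and squeezes
   [D y_n x] onto [h x]. Continuity of ⋆ is only sequential, so every
   limit is taken along sequences, using that the continuity points of a
   distribution function are dense. *)

Lemma continuity_pt_intro (f : R -> R) x :
  (forall eps, 0 < eps -> exists d, 0 < d /\
     forall y, Rabs (y - x) < d -> Rabs (f y - f x) < eps) ->
  continuity_pt f x.
Proof.
  intros H eps Heps. destruct (H eps Heps) as [d [Hd Hy]].
  exists d; split; [lra|]. intros y [_ Hyx]. apply Hy, Hyx.
Qed.

Lemma continuity_pt_elim (f : R -> R) x : continuity_pt f x ->
  forall eps, 0 < eps -> exists d, 0 < d /\
    forall y, Rabs (y - x) < d -> Rabs (f y - f x) < eps.
Proof.
  intros H eps Heps. destruct (H eps Heps) as [d [Hd Hy]].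
  exists d; split; [lra|]. intros y Hyx.
  destruct (Req_dec y x) as [->|Hne].
  - rewrite Rminus_diag, Rabs_R0; lra.
  - apply (Hy y). split; [split; [exact I | auto] | exact Hyx].
Qed.

Lemma continuity_pt_locally_const (f : R -> R) x d : 0 < d ->
  (forall y, Rabs (y - x) < d -> f y = f x) -> continuity_pt f x.
Proof.
  intros Hd Hf. apply continuity_pt_locally_ext with (fun _ => f x) d; auto.
  - intros y Hy. symmetry. apply Hf, Hy.
  - apply continuity_pt_const. intros ? ?. reflexivity.
Qed.

Lemma Un_cv_ub u l M : Un_cv u l -> (forall n, u n <= M) -> l <= M.
Proof.
  intros Hu HM. apply Rnot_lt_le; intros Hlt.
  destruct (Hu (l - M)) as [N HN]; [lra|]. specialize (HN N (le_n _)).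
  specialize (HM N). unfold Rdist in HN. apply Rabs_def2 in HN. lra.
Qed.

Lemma Un_cv_eventually_lb u l M : Un_cv u l ->
  (exists N, forall n, (n >= N)%nat -> M <= u n) -> M <= l.
Proof.
  intros Hu [N HN]. apply Rnot_lt_le; intros Hlt.
  destruct (Hu (M - l)) as [K HK]; [lra|].
  specialize (HK (max N K) (Nat.le_max_r _ _)).
  specialize (HN (max N K) (Nat.le_max_l _ _)).
  unfold Rdist in HK. apply Rabs_def2 in HK. lra.
Qed.

Definition inv_succ (n : nat) : R := / (INR n + 1).

Lemma inv_succ_pos n : 0 < inv_succ n.
Proof. unfold inv_succ. apply Rinv_0_lt_compat. pose proof (pos_INR n); lra. Qed.

Lemma inv_succ_half_le n : inv_succ n / 2 <= inv_succ (S n).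
Proof.
  unfold inv_succ. rewrite S_INR. pose proof (pos_INR n).
  replace (/ (INR n + 1) / 2) with (/ (2 * (INR n + 1))) by (field; lra).
  apply Rinv_le_contravar; lra.
Qed.

Lemma inv_succ_small eps : 0 < eps ->
  exists N, forall n, (n >= N)%nat -> inv_succ n < eps.
Proof.
  intros He. destruct (archimed_cor1 eps He) as [N [HN HN0]].
  exists N. intros n Hn. unfold inv_succ. eapply Rle_lt_trans; [|exact HN].
  apply Rinv_le_contravar; [apply lt_0_INR; auto|]. apply le_INR in Hn; lra.
Qed.

Lemma Rsup_upper (E : R -> Prop) r :
  (exists M, forall x, E x -> x <= M) -> E r -> r <= Rsup E.
Proof.
  intros [M HM] Hr. unfold Rsup.
  destruct (excluded_middle_informative _) as [H|H].
  - destruct (completeness E (proj1 H) (proj2 H)) as [m Hm]; simpl.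
    apply (proj1 Hm), Hr.
  - exfalso; apply H; split; [exists M; exact HM | exists r; exact Hr].
Qed.

Lemma Rsup_least (E : R -> Prop) M :
  (exists x, E x) -> (forall x, E x -> x <= M) -> Rsup E <= M.
Proof.
  intros Hne HM. unfold Rsup.
  destruct (excluded_middle_informative _) as [H|H].
  - destruct (completeness E (proj1 H) (proj2 H)) as [m Hm]; simpl.
    apply (proj2 Hm). exact HM.
  - exfalso; apply H; split; [exists M; exact HM | exact Hne].
Qed.

Lemma Rsup_approx (E : R -> Prop) M eps :
  (exists x, E x) -> M <= Rsup E -> 0 < eps -> exists x, E x /\ M - eps < x.
Proof.
  intros Hne HM He. apply NNPP; intros Hn.
  assert (Rsup E <= M - eps); [|lra].
  apply Rsup_least; auto. intros x Hx. apply Rnot_lt_le. intros Hlt. apply Hn; eauto.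
Qed.

Section ContinuityPoints.
Variable F : R -> R.
Hypothesis F_mono : forall s t, s <= t -> F s <= F t.
Hypothesis F_bounded : forall t, 0 <= F t <= 1.

(* Keep the half of [a, b] on which F increases by at most half as much as on
   [a, b], and pass to its middle third so that the intervals are strictly
   nested. *)
Definition shrink (p : R * R) : R * R :=
  let (a, b) := p in let m := (a + b) / 2 in
  if Rle_dec (F m - F a) ((F b - F a) / 2)
  then (a + (m - a) / 3, a + 2 * (m - a) / 3)
  else (m + (b - m) / 3, m + 2 * (b - m) / 3).

Lemma shrink_spec a b : a < b ->
  a < fst (shrink (a, b)) < snd (shrink (a, b)) /\ snd (shrink (a, b)) < b /\
  F (snd (shrink (a, b))) - F (fst (shrink (a, b))) <= (F b - F a) / 2.
Proof.
  intros Hab. unfold shrink. destruct (Rle_dec _ _) as [H|H]; simpl.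
  - assert (F (a + 2 * ((a + b) / 2 - a) / 3) <= F ((a + b) / 2)) by (apply F_mono; lra).
    assert (F a <= F (a + ((a + b) / 2 - a) / 3)) by (apply F_mono; lra). lra.
  - assert (F ((a + b) / 2 + 2 * (b - (a + b) / 2) / 3) <= F b) by (apply F_mono; lra).
    assert (F ((a + b) / 2) <= F ((a + b) / 2 + (b - (a + b) / 2) / 3))
      by (apply F_mono; lra). lra.
Qed.

Lemma shrink_iter_spec a b : a < b -> forall n,
  let p := Nat.iter n shrink (a, b) in
  let q := shrink p in
  fst p < fst q /\ fst q < snd q /\ snd q < snd p /\
  F (snd p) - F (fst p) <= inv_succ n.
Proof.
  intros Hab n. induction n as [|n IH]; intros p q; subst p q.
  - destruct (shrink_spec a b Hab) as [H1 [H2 H3]]. simpl in *.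
    assert (0 <= F a /\ F b <= 1) by (split; apply F_bounded).
    unfold inv_succ; simpl. rewrite Rplus_0_l, Rinv_1. lra.
  - simpl in IH |- *. destruct (Nat.iter n shrink (a, b)) as [a' b'].
    destruct (shrink (a', b')) as [a'' b''] eqn:E. simpl in IH.
    destruct IH as [I1 [I2 [I3 I4]]].
    destruct (shrink_spec a'' b'' I2) as [K1 [K2 K3]].
    pose proof (shrink_spec a' b' ltac:(lra)) as Hs. rewrite E in Hs. simpl in Hs.
    pose proof (inv_succ_half_le n). cbn [fst snd]. lra.
Qed.

Lemma shrink_iter_nested a b : a < b -> forall n m, (n <= m)%nat ->
  fst (Nat.iter n shrink (a, b)) <= fst (Nat.iter m shrink (a, b)) /\
  snd (Nat.iter m shrink (a, b)) <= snd (Nat.iter n shrink (a, b)).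
Proof.
  intros Hab n m Hnm. induction Hnm as [|m _ IH]; [lra|].
  destruct (shrink_iter_spec a b Hab m) as [H1 [_ [H3 _]]]. simpl. lra.
Qed.

Lemma exists_continuity_pt_between a b : a < b ->
  exists x, a < x < b /\ continuity_pt F x.
Proof.
  intros Hab.
  pose (l n := fst (Nat.iter n shrink (a, b))).
  pose (u n := snd (Nat.iter n shrink (a, b))).
  assert (Hlu : forall n m, l n < u m).
  { intros n m.
    destruct (shrink_iter_nested a b Hab n (max n m) (Nat.le_max_l _ _)) as [A _].
    destruct (shrink_iter_nested a b Hab m (max n m) (Nat.le_max_r _ _)) as [_ B].
    destruct (shrink_iter_spec a b Hab (max n m)) as [C1 [C2 [C3 _]]].
    unfold l, u in *. lra. }
  pose (x := Rsup (fun r => exists n, r = l n)).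
  assert (Hl : forall n, l n <= x).
  { intros n. apply Rsup_upper; [|eauto].
    exists (u 0%nat). intros r [k ->]. left; apply Hlu. }
  assert (Hu : forall m, x <= u m).
  { intros m. apply Rsup_least; [exists (l 0%nat), 0%nat; reflexivity|].
    intros r [k ->]. left; apply Hlu. }
  assert (Hin : forall n, l n < x < u n).
  { intros n. destruct (shrink_iter_spec a b Hab n) as [H1 [_ [H3 _]]].
    specialize (Hl (S n)); specialize (Hu (S n)). unfold l, u in *. simpl in *. lra. }
  exists x. split.
  - specialize (Hin 0%nat). unfold l, u in Hin. simpl in Hin. lra.
  - apply continuity_pt_intro. intros eps He.
    destruct (inv_succ_small eps He) as [N HN]. specialize (HN N (le_n _)).
    destruct (Hin N) as [Hlx Hxu].
    destruct (shrink_iter_spec a b Hab N) as [_ [_ [_ W]]]. fold (l N) (u N) in W.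
    exists (Rmin (x - l N) (u N - x)). split; [apply Rmin_glb_lt; lra|].
    intros y Hy.
    pose proof (Rlt_le_trans _ _ _ Hy (Rmin_l _ _)) as Hy1.
    pose proof (Rlt_le_trans _ _ _ Hy (Rmin_r _ _)) as Hy2.
    apply Rabs_def2 in Hy1. apply Rabs_def2 in Hy2.
    assert (F (l N) <= F y) by (apply F_mono; lra).
    assert (F y <= F (u N)) by (apply F_mono; lra).
    assert (F (l N) <= F x) by (apply F_mono; lra).
    assert (F x <= F (u N)) by (apply F_mono; lra).
    apply Rabs_def1; lra.
Qed.

End ContinuityPoints.

Lemma H0_in_Delta : in_Delta H0.
Proof.
  unfold in_Delta, H0. split; [|split; [|split]].
  - intros t; destruct (Rle_dec t 0); lra.
  - intros s t Hst; destruct (Rle_dec s 0), (Rle_dec t 0); lra.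
  - intros t eps He. destruct (Rle_dec t 0) as [Ht|Ht].
    + exists 1; split; [lra|]. intros s _ Hs. destruct (Rle_dec s 0); [|lra].
      rewrite Rminus_0_r, Rabs_R0; lra.
    + exists t; split; [lra|]. intros s Hs _. destruct (Rle_dec s 0); [lra|].
      rewrite Rminus_diag, Rabs_R0; lra.
  - destruct (Rle_dec 0 0); lra.
Qed.

Lemma H0_pos t : 0 < t -> H0 t = 1.
Proof. intros; unfold H0; destruct (Rle_dec t 0); lra. Qed.

Lemma H0_nonpos t : t <= 0 -> H0 t = 0.
Proof. intros; unfold H0; destruct (Rle_dec t 0); lra. Qed.

Lemma H0_continuity_pt t : 0 < t -> continuity_pt H0 t.
Proof.
  intros Ht. apply continuity_pt_locally_const with t; auto.
  intros y Hy. apply Rabs_def2 in Hy. rewrite !H0_pos; lra.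
Qed.

Lemma Delta_bounded F t : in_Delta F -> 0 <= F t <= 1.
Proof. intros [Hb _]. apply Hb. Qed.

Lemma Delta_mono F s t : in_Delta F -> s <= t -> F s <= F t.
Proof. intros [_ [Hm _]]. apply Hm. Qed.

Lemma Delta_nonpos F t : in_Delta F -> t <= 0 -> F t = 0.
Proof.
  intros HF Ht. pose proof (Delta_mono F t 0 HF Ht). pose proof (Delta_bounded F t HF).
  destruct HF as [_ [_ [_ HF0]]]. lra.
Qed.

Lemma Delta_le_H0 F : in_Delta F -> Fle F H0.
Proof.
  intros HF t. destruct (Rle_dec t 0) as [Ht|Ht].
  - rewrite H0_nonpos, (Delta_nonpos F t); auto; lra.
  - rewrite H0_pos by lra. apply (Delta_bounded F t HF).
Qed.

Lemma exists_continuity_pt_Delta F a b : in_Delta F -> a < b ->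
  exists x, a < x < b /\ continuity_pt F x.
Proof.
  intros HF Hab. apply exists_continuity_pt_between; auto.
  - intros s t. apply Delta_mono, HF.
  - intros t. apply Delta_bounded, HF.
Qed.

Definition step (t c : R) : distf := fun r => if Rle_dec r t then 0 else c.

Lemma step_in_Delta t c : 0 <= t -> 0 <= c <= 1 -> in_Delta (step t c).
Proof.
  intros Ht Hc. unfold in_Delta, step. split; [|split; [|split]].
  - intros r; destruct (Rle_dec r t); lra.
  - intros r1 r2 Hr; destruct (Rle_dec r1 t), (Rle_dec r2 t); lra.
  - intros r eps He. destruct (Rle_dec r t) as [Hr|Hr].
    + exists 1; split; [lra|]. intros s _ Hs. destruct (Rle_dec s t); [|lra].
      rewrite Rminus_diag, Rabs_R0; lra.
    + exists (r - t); split; [lra|]. intros s Hs _. destruct (Rle_dec s t); [lra|].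
      rewrite Rminus_diag, Rabs_R0; lra.
  - destruct (Rle_dec 0 t); lra.
Qed.

Lemma step_continuity_pt t c s : t < s -> continuity_pt (step t c) s.
Proof.
  intros Hs. apply continuity_pt_locally_const with (s - t); [lra|].
  intros y Hy. apply Rabs_def2 in Hy.
  unfold step. destruct (Rle_dec y t), (Rle_dec s t); lra.
Qed.

Lemma wconv_const F : wconv (fun _ => F) F.
Proof.
  intros t _ eps He. exists 0%nat. intros. unfold Rdist.
  rewrite Rminus_diag, Rabs_R0; lra.
Qed.

Lemma wconv_le (Fs : nat -> distf) F (H : R -> R) : in_Delta F -> wconv Fs F ->
  (forall s t, s <= t -> H s <= H t) -> (forall n t, Fs n t <= H t) -> Fle F H.
Proof.
  intros HF Hw HH Hn t. apply Rle_plus_epsilon. intros eps He.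
  destruct (proj1 (proj2 (proj2 HF)) t eps He) as [d [Hd Hdd]].
  destruct (exists_continuity_pt_Delta F (t - d) t HF ltac:(lra)) as [x [Hx Hc]].
  assert (F x <= H x) by (apply (Un_cv_ub (fun n => Fs n x)); [apply Hw, Hc | auto]).
  assert (H x <= H t) by (apply HH; lra).
  specialize (Hdd x ltac:(lra) ltac:(lra)). apply Rabs_def2 in Hdd. lra.
Qed.

Lemma wconv_H0_unique (Fs : nat -> distf) F :
  in_Delta F -> wconv Fs F -> wconv Fs H0 -> F = H0.
Proof.
  intros HF H1 H2. apply functional_extensionality; intros t.
  destruct (Rle_dec t 0) as [Ht|Ht].
  - rewrite H0_nonpos, Delta_nonpos; auto.
  - rewrite H0_pos by lra. apply Rle_antisym; [apply (Delta_bounded F t HF)|].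
    destruct (exists_continuity_pt_Delta F (t / 2) t HF ltac:(lra)) as [s [Hs Hcs]].
    assert (F s = 1).
    { rewrite <- (H0_pos s) by lra. apply (UL_sequence (fun n => Fs n s)).
      - apply H1, Hcs.
      - apply H2, H0_continuity_pt; lra. }
    pose proof (Delta_mono F s t HF ltac:(lra)). lra.
Qed.

Lemma wconv_H0_intro (Fs : nat -> distf) : (forall n, in_Delta (Fs n)) ->
  (forall t eps, 0 < t -> 0 < eps -> exists N, forall n, (n >= N)%nat -> 1 - eps < Fs n t) ->
  wconv Fs H0.
Proof.
  intros HD Hlim t _ eps He.
  destruct (Rle_dec t 0) as [Ht|Ht].
  - exists 0%nat. intros n _. unfold Rdist.
    rewrite (Delta_nonpos (Fs n) t (HD n) Ht), H0_nonpos, Rminus_diag, Rabs_R0; auto.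
  - destruct (Hlim t eps ltac:(lra) He) as [N HN]. exists N. intros n Hn.
    specialize (HN n Hn). pose proof (Delta_bounded (Fs n) t (HD n)).
    unfold Rdist. rewrite H0_pos by lra. apply Rabs_def1; lra.
Qed.

Lemma wconv_H0_elim (Fs : nat -> distf) : wconv Fs H0 ->
  forall t eps, 0 < t -> 0 < eps -> exists N, forall n, (n >= N)%nat -> 1 - eps < Fs n t.
Proof.
  intros Hw t eps Ht He. destruct (Hw t (H0_continuity_pt t Ht) eps He) as [N HN].
  exists N. intros n Hn. specialize (HN n Hn). unfold Rdist in HN.
  rewrite H0_pos in HN by lra. apply Rabs_def2 in HN. lra.
Qed.

Lemma wconv_H0_squeeze (Fs Ls : nat -> distf) : (forall n, in_Delta (Fs n)) ->
  (forall n, Fle (Ls n) (Fs n)) -> wconv Ls H0 -> wconv Fs H0.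
Proof.
  intros HD Hle Hw. apply wconv_H0_intro; auto. intros t eps Ht He.
  destruct (wconv_H0_elim Ls Hw t eps Ht He) as [N HN].
  exists N. intros n Hn. specialize (HN n Hn). specialize (Hle n t). lra.
Qed.

Lemma wconv_H0_of_near_one (Fs : nat -> distf) (sg : nat -> nat) :
  (forall n, in_Delta (Fs n)) -> (forall n, (n <= sg n)%nat) ->
  (forall n, 1 - inv_succ (sg n) < Fs n (inv_succ (sg n))) -> wconv Fs H0.
Proof.
  intros HD Hsg Hv. apply wconv_H0_intro; auto. intros t eps Ht He.
  destruct (inv_succ_small (Rmin t eps) ltac:(apply Rmin_glb_lt; lra)) as [N HN].
  exists N. intros n Hn.
  assert (Hs : inv_succ (sg n) < Rmin t eps) by (apply HN; specialize (Hsg n); lia).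
  pose proof (Rmin_l t eps). pose proof (Rmin_r t eps).
  pose proof (Delta_mono (Fs n) (inv_succ (sg n)) t (HD n) ltac:(lra)).
  specialize (Hv n). lra.
Qed.

(* Sequential continuity of ⋆ only controls such subsequences. *)
Lemma wconv2_of_subsequences (Fs : nat -> nat -> distf) F :
  (forall sg tau : nat -> nat, (forall j, (j <= sg j)%nat) -> (forall j, (j <= tau j)%nat) ->
     wconv (fun j => Fs (sg j) (tau j)) F) ->
  wconv2 Fs F.
Proof.
  intros Hsub t Ht eps He. apply NNPP; intros Hn.
  assert (Hbad : forall N, exists np : nat * nat, (N <= fst np)%nat /\ (N <= snd np)%nat /\
                   eps <= Rabs (Fs (fst np) (snd np) t - F t)).
  { intros N. apply NNPP; intros Hc. apply Hn. exists N. intros n p Hn1 Hp1.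
    apply Rnot_le_lt. intros Hle. apply Hc. exists (n, p); simpl; auto. }
  destruct (choice _ Hbad) as [np Hnp].
  destruct (Hsub (fun j => fst (np j)) (fun j => snd (np j))
              (fun j => proj1 (Hnp j)) (fun j => proj1 (proj2 (Hnp j))) t Ht eps He)
    as [N HN].
  specialize (HN N (le_n _)). unfold Rdist in HN. destruct (Hnp N) as [_ [_ Hb]]. lra.
Qed.

Section TriangleFunction.
Variable star : distf -> distf -> distf.
Hypothesis Hstar : is_triangle_function star.

Lemma star_in_Delta F L : in_Delta F -> in_Delta L -> in_Delta (star F L).
Proof. destruct Hstar as [H _]; auto. Qed.

Lemma starC F L : in_Delta F -> in_Delta L -> star F L = star L F.
Proof. destruct Hstar as [_ [H _]]; auto. Qed.

Lemma star_monol F F' L : in_Delta F -> in_Delta F' -> in_Delta L ->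
  Fle F F' -> Fle (star F L) (star F' L).
Proof. destruct Hstar as [_ [_ [_ [H _]]]]; auto. Qed.

Lemma star_monor F L L' : in_Delta F -> in_Delta L -> in_Delta L' ->
  Fle L L' -> Fle (star F L) (star F L').
Proof. destruct Hstar as [_ [_ [_ [_ [H _]]]]]; auto. Qed.

Lemma starH0 F : in_Delta F -> star F H0 = F.
Proof. destruct Hstar as [_ [_ [_ [_ [_ H]]]]]; auto. Qed.

Lemma H0star F : in_Delta F -> star H0 F = F.
Proof. intros HF. rewrite starC; auto using H0_in_Delta, starH0. Qed.

Lemma star_le_l F L : in_Delta F -> in_Delta L -> Fle (star F L) F.
Proof.
  intros HF HL t.
  pose proof (star_monor F L H0 HF HL H0_in_Delta (Delta_le_H0 L HL) t) as H.
  rewrite starH0 in H; auto.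
Qed.

Lemma star_le_r F L : in_Delta F -> in_Delta L -> Fle (star F L) L.
Proof.
  intros HF HL t.
  pose proof (star_monol F H0 L HF H0_in_Delta HL (Delta_le_H0 F HF) t) as H.
  rewrite H0star in H; auto.
Qed.

Lemma unit_Delta_iff_H0 U : unit_Delta star U <-> U = H0.
Proof.
  split.
  - intros [HU [V [HV [HUV _]]]].
    apply functional_extensionality; intros t. apply Rle_antisym.
    + apply Delta_le_H0, HU.
    + rewrite <- HUV. apply star_le_l; auto.
  - intros ->. split; [apply H0_in_Delta|]. exists H0.
    rewrite starH0 by apply H0_in_Delta. auto using H0_in_Delta.
Qed.

Lemma bracket_H0 {G : Type} (f : G -> distf) : (forall x, in_Delta (f x)) ->
  bracket star f H0 = f.
Proof. intros Hf. apply functional_extensionality; intros x. apply starH0, Hf. Qed.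

Hypothesis Hcont : continuous_tf star.

Lemma wconv_star_H0_r (Fs Ls : nat -> distf) F :
  (forall n, in_Delta (Fs n)) -> (forall n, in_Delta (Ls n)) -> in_Delta F ->
  wconv Fs F -> wconv Ls H0 -> wconv (fun n => star (Fs n) (Ls n)) F.
Proof.
  intros HFs HLs HF HwF HwL.
  pose proof (Hcont Fs Ls F H0 HFs HLs HF H0_in_Delta HwF HwL) as Hw.
  rewrite starH0 in Hw; auto.
Qed.

Lemma wconv_star_H0_l (Fs Ls : nat -> distf) L :
  (forall n, in_Delta (Fs n)) -> (forall n, in_Delta (Ls n)) -> in_Delta L ->
  wconv Fs H0 -> wconv Ls L -> wconv (fun n => star (Fs n) (Ls n)) L.
Proof.
  intros HFs HLs HL HwF HwL.
  pose proof (Hcont Fs Ls H0 L HFs HLs H0_in_Delta HL HwF HwL) as Hw.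
  rewrite H0star in Hw; auto.
Qed.

(* If [Fs n t >= c] then [step t c <= Fs n], and [step t c ⋆ Ls n] tends to
   [step t c], which exceeds [H] at [s]. *)
Lemma eventually_lt_of_star_le (Fs Ls : nat -> distf) (H : distf) t s c :
  (forall n, in_Delta (Fs n)) -> (forall n, in_Delta (Ls n)) -> in_Delta H ->
  wconv Ls H0 -> (forall n, Fle (star (Fs n) (Ls n)) H) -> t < s -> H s < c ->
  exists N, forall n, (n >= N)%nat -> Fs n t < c.
Proof.
  intros HFs HLs HH HwL Hle Hts Hc.
  pose proof (Delta_bounded H s HH) as HHs.
  destruct (Rle_dec c 1) as [Hc1|Hc1];
    [|exists 0%nat; intros n _; pose proof (Delta_bounded (Fs n) t (HFs n)); lra].
  destruct (Rle_dec t 0) as [Ht|Ht];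
    [exists 0%nat; intros n _; rewrite (Delta_nonpos (Fs n) t (HFs n) Ht); lra|].
  assert (Hstep : in_Delta (step t c)) by (apply step_in_Delta; lra).
  assert (Hsc : step t c s = c) by (unfold step; destruct (Rle_dec s t); lra).
  pose proof (wconv_star_H0_r (fun _ => step t c) Ls (step t c) (fun _ => Hstep) HLs Hstep
                (wconv_const _) HwL) as Hw.
  destruct (Hw s (step_continuity_pt t c s Hts) (c - H s) ltac:(lra)) as [N HN].
  exists N. intros n Hn. specialize (HN n Hn). unfold Rdist in HN. rewrite Hsc in HN.
  apply Rabs_def2 in HN.
  apply Rnot_le_lt. intros Hge.
  assert (Hstep_le : Fle (step t c) (Fs n)).
  { intros r. unfold step. destruct (Rle_dec r t).
    - apply (Delta_bounded (Fs n) r (HFs n)).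
    - pose proof (Delta_mono (Fs n) t r (HFs n) ltac:(lra)). lra. }
  pose proof (star_monol _ _ (Ls n) Hstep (HFs n) (HLs n) Hstep_le s).
  pose proof (Hle n s). lra.
Qed.

End TriangleFunction.

Section ProbabilisticMetricGroup.
Variable star : distf -> distf -> distf.
Variable G : Type.
Variables (mul : G -> G -> G) (e : G) (inv : G -> G) (D : G -> G -> distf).
Hypothesis Hstar : is_triangle_function star.
Hypothesis Hcont : continuous_tf star.
Hypothesis HPM : is_PM star D.
Hypothesis HDinv : is_invariant mul D.
Hypothesis mulA : forall x y z, mul (mul x y) z = mul x (mul y z).
Hypothesis mul1g : forall x, mul e x = x.
Hypothesis mulg1 : forall x, mul x e = x.
Hypothesis mulVg : forall x, mul (inv x) x = e.
Hypothesis mulgV : forall x, mul x (inv x) = e.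

Lemma D_in_Delta p q : in_Delta (D p q).
Proof. destruct HPM as [H _]; auto. Qed.

Lemma D_refl p : D p p = H0.
Proof. destruct HPM as [_ [H _]]. apply H; auto. Qed.

Lemma D_sym p q : D p q = D q p.
Proof. destruct HPM as [_ [_ [H _]]]; auto. Qed.

Lemma D_triangle p q r : Fle (star (D p q) (D q r)) (D p r).
Proof. destruct HPM as [_ [_ [_ H]]]; auto. Qed.

Lemma D_mulr p q r : D (mul p r) (mul q r) = D p q.
Proof. apply HDinv. Qed.

Lemma D_mull p q r : D (mul r p) (mul r q) = D p q.
Proof. apply HDinv. Qed.

Lemma D_inv p q : D (inv p) (inv q) = D p q.
Proof.
  rewrite <- (D_mull (inv p) (inv q) p), mulgV, <- (D_mulr e (mul p (inv q)) q).
  rewrite mulA, mulVg, mulg1, mul1g. apply D_sym.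
Qed.

Lemma invK x : inv (inv x) = x.
Proof. rewrite <- (mulg1 (inv (inv x))), <- (mulVg x), <- mulA, mulVg, mul1g. reflexivity. Qed.

Lemma star_le_odot f g y z t : (forall u, in_Delta (f u)) -> (forall u, in_Delta (g u)) ->
  star (f y) (g z) t <= odot star mul f g (mul y z) t.
Proof.
  intros Hf Hg. apply Rsup_upper; [|exists y, z; auto].
  exists 1. intros r [y' [z' [_ ->]]].
  apply (Delta_bounded _ _ (star_in_Delta star Hstar _ _ (Hf y') (Hg z'))).
Qed.

Lemma odot_eq_of_bounds f g x (T : distf) (Fs : nat -> distf) :
  (forall u, in_Delta (f u)) -> (forall u, in_Delta (g u)) -> in_Delta T ->
  (forall y z, mul y z = x -> Fle (star (f y) (g z)) T) ->
  (forall n, exists y z, mul y z = x /\ Fle (Fs n) (star (f y) (g z))) ->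
  wconv Fs T -> odot star mul f g x = T.
Proof.
  intros Hf Hg HT Hub Hex Hw. apply functional_extensionality; intros t.
  assert (Hne : forall s, exists r, exists y z, mul y z = x /\ r = star (f y) (g z) s).
  { intros s. destruct (Hex 0%nat) as [y [z [Hyz _]]]. eexists; exists y, z; eauto. }
  assert (Hle : forall y z s, mul y z = x -> star (f y) (g z) s <= odot star mul f g x s).
  { intros y z s <-. apply star_le_odot; auto. }
  apply Rle_antisym.
  - apply Rsup_least; auto. intros r [y [z [Hyz ->]]]. apply Hub, Hyz.
  - apply (wconv_le Fs T (odot star mul f g x)); auto.
    + intros s1 s2 Hs. apply Rsup_least; auto. intros r [y [z [Hyz ->]]].
      apply Rle_trans with (star (f y) (g z) s2); auto.
      apply Delta_mono; auto using star_in_Delta.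
    + intros n s. destruct (Hex n) as [y [z [Hyz HFs]]].
      apply Rle_trans with (star (f y) (g z) s); auto.
Qed.

Lemma Pi_star_le_D f a : (forall x, in_Delta (f x)) ->
  (forall x, wconv (fun n => D (a n) x) (f x)) ->
  forall u v, Fle (star (f u) (f v)) (D u v).
Proof.
  intros Hf Hw u v.
  assert (Hwu : wconv (fun n => D u (a n)) (f u)).
  { replace (fun n => D u (a n)) with (fun n => D (a n) u); auto.
    apply functional_extensionality; intros; apply D_sym. }
  apply (wconv_le (fun n => star (D u (a n)) (D (a n) v))).
  - apply star_in_Delta; auto.
  - apply Hcont; auto using D_in_Delta.
  - intros s t. apply Delta_mono, D_in_Delta.
  - intros n t. apply D_triangle.
Qed.

Lemma Pi_seq_H0 f a : (forall x, in_Delta (f x)) -> Cauchy_seq D a ->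
  (forall x, wconv (fun n => D (a n) x) (f x)) -> wconv (fun n => f (a n)) H0.
Proof.
  intros Hf Hc Hw. apply wconv_H0_intro; auto. intros t eps Ht He.
  destruct (Hc (t / 2) (H0_continuity_pt (t / 2) ltac:(lra)) (eps / 2) ltac:(lra))
    as [N HN].
  exists N. intros n Hn.
  destruct (exists_continuity_pt_Delta (f (a n)) (t / 2) t (Hf _) ltac:(lra))
    as [s [Hs Hcs]].
  assert (1 - eps / 2 <= f (a n) s).
  { apply (Un_cv_eventually_lb (fun p => D (a p) (a n) s)); [apply Hw, Hcs|].
    exists N. intros p Hp. specialize (HN p n Hp Hn). simpl in HN.
    rewrite H0_pos in HN by lra. apply Rabs_def2 in HN.
    pose proof (Delta_mono _ (t / 2) s (D_in_Delta (a p) (a n)) ltac:(lra)). lra. }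
  pose proof (Delta_mono _ s t (Hf (a n)) ltac:(lra)). lra.
Qed.

Lemma Lip_comp_inv f : is_Lip star D f -> is_Lip star D (fun x => f (inv x)).
Proof.
  intros [Hf HfL]. split; auto. intros x y. rewrite <- D_inv. apply HfL.
Qed.

Section PiInverse.
Variables (f : G -> distf) (a : nat -> G).
Hypothesis Hf : is_Lip star D f.
Hypothesis Ha : Cauchy_seq D a.
Hypothesis Hfa : forall x, wconv (fun n => D (a n) x) (f x).

Let f_in_Delta x : in_Delta (f x) := proj1 Hf x.

Lemma Pi_odot_comp_inv_r : odot star mul f (fun x => f (inv x)) = delta D e.
Proof.
  apply functional_extensionality; intros x. unfold delta.
  pose proof (Pi_seq_H0 f a f_in_Delta Ha Hfa) as HaH0.
  apply odot_eq_of_bounds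
    with (Fs := fun n => star (star (D x e) (f (a n))) (f (a n))); auto using D_in_Delta.
  - intros y z Hyz t. eapply Rle_trans; [apply (Pi_star_le_D f a f_in_Delta Hfa)|].
    rewrite <- (D_mulr y (inv z) z), mulVg, Hyz. lra.
  - intros n. exists (mul x (a n)), (inv (a n)). split; [rewrite mulA, mulgV; auto|].
    rewrite invK. apply star_monol; auto using star_in_Delta, D_in_Delta.
    rewrite <- (D_mulr x e (a n)), mul1g. apply (proj2 Hf).
  - apply wconv_star_H0_r; auto using star_in_Delta, D_in_Delta.
    apply wconv_star_H0_r; auto using wconv_const, D_in_Delta.
Qed.

Lemma Pi_odot_comp_inv_l : odot star mul (fun x => f (inv x)) f = delta D e.
Proof.
  apply functional_extensionality; intros x. unfold delta.
  pose proof (Pi_seq_H0 f a f_in_Delta Ha Hfa) as HaH0.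
  apply odot_eq_of_bounds
    with (Fs := fun n => star (f (a n)) (star (D x e) (f (a n)))); auto using D_in_Delta.
  - intros y z Hyz t. eapply Rle_trans; [apply (Pi_star_le_D f a f_in_Delta Hfa)|].
    rewrite <- (D_mull (inv y) z y), mulgV, Hyz, D_sym. lra.
  - intros n. exists (inv (a n)), (mul (a n) x). split; [rewrite <- mulA, mulVg; auto|].
    rewrite invK. apply star_monor; auto using star_in_Delta, D_in_Delta.
    rewrite <- (D_mull x e (a n)), mulg1. apply (proj2 Hf).
  - apply wconv_star_H0_l; auto using star_in_Delta, D_in_Delta.
    apply wconv_star_H0_r; auto using wconv_const, D_in_Delta.
Qed.

End PiInverse.

Lemma Pi_unit_Lip f : in_Pi star D f -> unit_Lip star mul e D f.
Proof.
  intros [Hf [a [Ha Hfa]]]. split; auto.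
  exists (fun x => f (inv x)). split; [apply Lip_comp_inv, Hf|].
  split; [apply (Pi_odot_comp_inv_r f a) | apply (Pi_odot_comp_inv_l f a)]; auto.
Qed.

Section RightInverse.
Variables (h k : G -> distf).
Hypothesis Hh : is_Lip star D h.
Hypothesis Hk : is_Lip star D k.
Hypothesis Hhk : odot star mul h k = delta D e.

Let h_in_Delta x : in_Delta (h x) := proj1 Hh x.
Let k_in_Delta x : in_Delta (k x) := proj1 Hk x.

Lemma odot_delta_e_pairs : exists ys zs : nat -> G, forall n,
  mul (ys n) (zs n) = e /\ 1 - inv_succ n < star (h (ys n)) (k (zs n)) (inv_succ n).
Proof.
  assert (Hpair : forall n, exists p : G * G, mul (fst p) (snd p) = e /\
            1 - inv_succ n < star (h (fst p)) (k (snd p)) (inv_succ n)).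
  { intros n.
    assert (Hone : odot star mul h k e (inv_succ n) = 1).
    { rewrite Hhk. unfold delta. rewrite D_refl, H0_pos; auto using inv_succ_pos. }
    destruct (Rsup_approx (fun r => exists y z, mul y z = e /\
                             r = star (h y) (k z) (inv_succ n)) 1 (inv_succ n))
      as [r [[y [z [Hyz ->]]] Hr]].
    - eexists; exists e, e; split; [apply mul1g | reflexivity].
    - unfold odot in Hone. lra.
    - apply inv_succ_pos.
    - exists (y, z); auto. }
  destruct (choice _ Hpair) as [p Hp].
  exists (fun n => fst (p n)), (fun n => snd (p n)). exact Hp.
Qed.

Section ApproximatingPairs.
Variables ys zs : nat -> G.
Hypothesis Hpairs : forall n,
  mul (ys n) (zs n) = e /\ 1 - inv_succ n < star (h (ys n)) (k (zs n)) (inv_succ n).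

Lemma pairs_h_H0 (sg : nat -> nat) : (forall j, (j <= sg j)%nat) ->
  wconv (fun j => h (ys (sg j))) H0.
Proof.
  intros Hsg. apply (wconv_H0_of_near_one _ sg); auto. intros j.
  destruct (Hpairs (sg j)) as [_ Hj].
  pose proof (star_le_l star Hstar _ _ (h_in_Delta (ys (sg j))) (k_in_Delta (zs (sg j)))
                (inv_succ (sg j))). lra.
Qed.

Lemma pairs_k_H0 (sg : nat -> nat) : (forall j, (j <= sg j)%nat) ->
  wconv (fun j => k (zs (sg j))) H0.
Proof.
  intros Hsg. apply (wconv_H0_of_near_one _ sg); auto. intros j.
  destruct (Hpairs (sg j)) as [_ Hj].
  pose proof (star_le_r star Hstar _ _ (h_in_Delta (ys (sg j))) (k_in_Delta (zs (sg j)))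
                (inv_succ (sg j))). lra.
Qed.

(* (h ⊙ k)(x z_m) = D (x z_m) e = D (x z_m) (y_m z_m) = D x y_m *)
Lemma pairs_star_le_D x m : Fle (star (h x) (k (zs m))) (D x (ys m)).
Proof.
  intros t. rewrite <- (D_mulr x (ys m) (zs m)), (proj1 (Hpairs m)).
  change (D (mul x (zs m)) e t) with (delta D e (mul x (zs m)) t).
  rewrite <- Hhk. apply star_le_odot; auto.
Qed.

Lemma pairs_Cauchy : Cauchy_seq D ys.
Proof.
  apply wconv2_of_subsequences. intros sg tau Hsg Htau.
  apply (wconv_H0_squeeze _ (fun j => star (h (ys (sg j))) (k (zs (tau j)))));
    auto using D_in_Delta, pairs_star_le_D.
  apply wconv_star_H0_r; auto using H0_in_Delta, pairs_h_H0, pairs_k_H0.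
Qed.

Lemma pairs_wconv x : wconv (fun n => D (ys n) x) (h x).
Proof.
  intros t Ht eps He.
  destruct (wconv_star_H0_r star Hstar Hcont (fun _ => h x) (fun n => k (zs n)) (h x)
              (fun _ => h_in_Delta x) (fun n => k_in_Delta _) (h_in_Delta x) (wconv_const _)
              (pairs_k_H0 (fun n => n) (fun n => le_n n)) t Ht eps He) as [N1 HN1].
  destruct (continuity_pt_elim _ _ Ht (eps / 2) ltac:(lra)) as [d [Hd Hdd]].
  assert (Hs : Rabs (h x (t + d / 2) - h x t) < eps / 2)
    by (apply Hdd; rewrite Rabs_right; lra).
  apply Rabs_def2 in Hs.
  destruct (eventually_lt_of_star_le star Hstar Hcont (fun n => D x (ys n))
              (fun n => h (ys n)) (h x) t (t + d / 2) (h x t + eps)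
              (fun n => D_in_Delta _ _) (fun n => h_in_Delta _) (h_in_Delta x)
              (pairs_h_H0 (fun n => n) (fun n => le_n n)) (fun n => proj2 Hh x (ys n))
              ltac:(lra) ltac:(lra)) as [N2 HN2].
  exists (max N1 N2). intros n Hn.
  specialize (HN1 n ltac:(lia)). specialize (HN2 n ltac:(lia)). unfold Rdist in *.
  pose proof (pairs_star_le_D x n t) as Hlow. rewrite D_sym in HN2, Hlow.
  apply Rabs_def2 in HN1. apply Rabs_def1; lra.
Qed.

End ApproximatingPairs.

Lemma Pi_of_odot_delta_e : in_Pi star D h.
Proof.
  destruct odot_delta_e_pairs as [ys [zs Hpairs]].
  split; [exact Hh|]. exists ys.
  split; [apply (pairs_Cauchy ys zs) | intros x; apply (pairs_wconv ys zs)]; auto.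
Qed.

End RightInverse.

Lemma unit_Lip_iff_Pi h : unit_Lip star mul e D h <-> in_Pi star D h.
Proof.
  split; [|apply Pi_unit_Lip].
  intros [Hh [k [Hk [Hhk _]]]]. apply (Pi_of_odot_delta_e h k); auto.
Qed.

Lemma delta_in_Pi a : in_Pi star D (delta D a).
Proof.
  split.
  - split; [intros; apply D_in_Delta|]. intros x y. apply D_triangle.
  - exists (fun _ => a). split.
    + intros t _ eps He. exists 0%nat. intros.
      rewrite D_refl, Rminus_diag, Rabs_R0; lra.
    + intros x. unfold delta. rewrite D_sym. apply wconv_const.
Qed.

(* In a complete space the Cauchy sequence defining [f] has a limit [x]; then
   [f x = H0], and the Lipschitz property together with [f u ⋆ f v <= D u v]
   pins [f] down to [δ_x]. *)
Lemma Pi_delta_of_complete f : complete_PM D -> in_Pi star D f -> exists x, f = delta D x.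
Proof.
  intros Hcomp [[Hf HfL] [a [Ha Hfa]]].
  destruct (Hcomp a Ha) as [x Hx].
  assert (Hfx : f x = H0) by (apply (wconv_H0_unique (fun n => D (a n) x)); auto).
  exists x. apply functional_extensionality; intros y. unfold delta.
  apply functional_extensionality; intros t. apply Rle_antisym.
  - pose proof (Pi_star_le_D f a Hf Hfa y x t) as H. rewrite Hfx, (starH0 star Hstar) in H; auto.
  - pose proof (HfL y x t) as H. rewrite Hfx, (starH0 star Hstar) in H; auto using D_in_Delta.
Qed.

Lemma odot_delta a b : odot star mul (delta D a) (delta D b) = delta D (mul a b).
Proof.
  apply functional_extensionality; intros x.
  apply odot_eq_of_bounds with (Fs := fun _ => D x (mul a b));
    try (intros; apply D_in_Delta).
  - intros y z Hyz. unfold delta.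
    rewrite <- (D_mulr y a z), <- (D_mull z b a), Hyz. apply D_triangle.
  - intros n. exists a, (mul (inv a) x). split; [rewrite <- mulA, mulgV; auto|].
    unfold delta. rewrite D_refl, (H0star star Hstar) by apply D_in_Delta.
    rewrite <- (D_mull (mul (inv a) x) b a), <- mulA, mulgV, mul1g. intros t; lra.
  - apply wconv_const.
Qed.

Lemma delta_inj a b : delta D a = delta D b -> a = b.
Proof.
  intros H. assert (Hab : D a a = D a b) by (change (delta D a a = delta D b a); congruence).
  rewrite D_refl in Hab. destruct HPM as [_ [Hi _]]. apply Hi; auto.
Qed.

Lemma DD_delta a b : DD star (delta D a) (delta D b) = D a b.
Proof.
  apply functional_extensionality; intros t. unfold DD, delta. apply Rle_antisym.
  - apply Rsup_least; [exists (star (D a a) (D a b) t), a; auto|].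
    intros r [x ->]. rewrite (D_sym x a). apply D_triangle.
  - apply Rsup_upper.
    + exists 1. intros r [x ->].
      apply (Delta_bounded _ _ (star_in_Delta star Hstar _ _ (D_in_Delta x a) (D_in_Delta x b))).
    + exists a. rewrite D_refl, (H0star star Hstar); auto using D_in_Delta.
Qed.

End ProbabilisticMetricGroup.

Theorem theorem2
  (star : distf -> distf -> distf)
  (G : Type) (mul : G -> G -> G) (e : G) (D : G -> G -> distf)
  (Hstar : is_triangle_function star)
  (Hcont : continuous_tf star)
  (Hsup : sup_continuous star)
  (Hgrp : is_group mul e)
  (HPM : is_PM star D)
  (Hinv : is_invariant mul D) :
  (forall h : G -> distf,
     unit_Lip star mul e D h <->
     exists f U, in_Pi star D f /\ unit_Delta star U /\ h = bracket star f U) /\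
  (forall f g U V,
     in_Pi star D f -> in_Pi star D g ->
     odot star mul f g = delta D e -> odot star mul g f = delta D e ->
     unit_Delta star U -> in_Delta V -> star U V = H0 -> star V U = H0 ->
     odot star mul (bracket star f U) (bracket star g V) = delta D e /\
     odot star mul (bracket star g V) (bracket star f U) = delta D e) /\
  ((forall U, unit_Delta star U <-> U = H0) ->
     forall h, unit_Lip star mul e D h <-> in_Pi star D h) /\
  ((forall U, unit_Delta star U <-> U = H0) -> complete_PM D ->
     (forall h, unit_Lip star mul e D h <-> exists a, h = delta D a) /\
     (forall a b, odot star mul (delta D a) (delta D b) = delta D (mul a b)) /\
     (forall a b, delta D a = delta D b -> a = b) /\
     (forall a b, DD star (delta D a) (delta D b) = D a b)).
Proof.
  destruct Hgrp as [mulA [mul1g [mulg1 Hinverse]]].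
  destruct (choice _ Hinverse) as [inv Hinv_spec].
  pose proof (unit_Lip_iff_Pi star G mul e inv D Hstar Hcont HPM Hinv mulA mul1g mulg1
                (fun x => proj1 (Hinv_spec x)) (fun x => proj2 (Hinv_spec x))) as Hunit.
  pose proof (unit_Delta_iff_H0 star Hstar) as HU_H0.
  assert (Hbracket : forall f, in_Pi star D f -> bracket star f H0 = f)
    by (intros f [[Hf _] _]; apply (bracket_H0 star Hstar), Hf).
  split; [|split; [|split]].
  - intros h. rewrite Hunit. split.
    + intros Hh. exists h, H0. rewrite HU_H0, Hbracket; auto.
    + intros [f [U [Hf [HU ->]]]]. rewrite HU_H0 in HU. subst U. rewrite Hbracket; auto.
  - intros f g U V Hf Hg Hfg Hgf HU HV HUV _.
    rewrite HU_H0 in HU. subst U. rewrite (H0star star Hstar) in HUV by exact HV.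
    subst V. rewrite !Hbracket; auto.
  - intros _. exact Hunit.
  - intros _ Hcomp. split; [|split; [|split]].
    + intros h. rewrite Hunit. split.
      * apply (Pi_delta_of_complete star G D Hstar Hcont HPM h Hcomp).
      * intros [a ->]. apply (delta_in_Pi star G D HPM a).
    + apply (odot_delta star G mul e inv D Hstar HPM Hinv mulA mul1g
               (fun x => proj2 (Hinv_spec x))).
    + apply (delta_inj star G D HPM).
    + apply (DD_delta star G D Hstar HPM).
Qed.
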